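(* Let $k\ge2$ and let $H$ be a $k$-uniform hypergraph of maximum degree $\Delta$ with a given perfect matching $M$. Then $Z_{\mathrm{pm}}(H,M,z)\neq0$ for all $z\in\mathbb C$ with $|z|\le\big((\Delta-1+k)e\big)^{-1}$.
   Context: A perfect matching of $H$ is a set of pairwise disjoint hyperedges covering all vertices. $Z_{\mathrm{pm}}(H,M,z)=\sum_{M'}z^{|M\triangle M'|}$, the sum over all perfect matchings $M'$ of $H$. The degree of a vertex is the number of hyperedges containing it. *)

From Stdlib Require Import Reals.
From mathcomp Require Import all_boot.

Set Implicit Arguments.
Unset Strict Implicit.
Unset Printing Implicit Defensive.

Definition Cplx : Type := prod R R.
Definition C0 : Cplx := pair R0 R0.
Definition C1 : Cplx := pair R1 R0.
Definition Cadd (a b : Cplx) : Cplx := pair (Rplus a.1 b.1) (Rplus a.2 b.2).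
Definition Cmul (a b : Cplx) : Cplx :=
  pair (Rminus (Rmult a.1 b.1) (Rmult a.2 b.2))
       (Rplus (Rmult a.1 b.2) (Rmult a.2 b.1)).
Fixpoint Cpow (a : Cplx) (n : nat) : Cplx :=
  match n with O => C1 | S m => Cmul a (Cpow a m) end.
Definition Cnorm (a : Cplx) : R := sqrt (Rplus (Rmult a.1 a.1) (Rmult a.2 a.2)).

Definition uniform (V : finType) (k : nat) (E : {set {set V}}) : bool :=
  [forall e in E, #|e| == k].

Definition degree (V : finType) (E : {set {set V}}) (v : V) : nat :=
  #|[set e in E | v \in e]|.

Definition max_degree (V : finType) (E : {set {set V}}) : nat :=
  \max_(v : V) degree E v.

Definition perfect_matching (V : finType) (E M : {set {set V}}) : bool :=
  [&& M \subset E,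
      [forall e1 in M, forall e2 in M, (e1 != e2) ==> [disjoint e1 & e2]]
    & [forall v : V, exists e in M, v \in e]].

Definition symdiff (T : finType) (A B : {set T}) : {set T} :=
  (A :\: B) :|: (B :\: A).

Definition Zpm (V : finType) (E M : {set {set V}}) (z : Cplx) : Cplx :=
  foldr Cadd C0
    [seq Cpow z #|symdiff M M'| | M' <- enum [set M' | perfect_matching E M']].

(* Write x = z^2.  A perfect matching M' of H is determined by P = M' minus M: a
   family of pairwise disjoint edges outside M whose union is a union of edges
   of M; and |M symdiff M'| = 2|P|, since both halves of the symmetric
   difference cover the same k|P| vertices.  Hence Z_pm(H, M, z) = Zsub V,
   where for a vertex set W, Zsub W sums x^|P| over the W-admissible P:
   disjoint non-matching edges inside W whose complement in W is a union of
   edges of M.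

   Zsub obeys a deletion recursion at every vertex v of W: either an edge of P
   covers v, or the M-edge at v lies in the uncovered part of W.  Assuming
   2 |x| (Delta - 1) <= 1, a strong induction on |W| proves two bounds at once:
   if W is a union of M-edges then Zsub W <> 0 and deleting one of these edges
   at most doubles |Zsub|; for arbitrary W, every k vertices of W outside the
   M-edges it contains halve |Zsub| relative to their union.  The theorem
   follows, since the radius ((Delta - 1 + k) e)^-1 is well inside this region. *)

From HB Require Import structures.
From Pilot Require Import Defs.
From Stdlib Require Import Reals Lra.
From mathcomp Require Import all_boot zify.
From Coquelicot Require Complex.

Set Implicit Arguments.
Unset Strict Implicit.
Unset Printing Implicit Defensive.
Local Open Scope R_scope.

(* [Cplx] is Coquelicot's type of complex numbers, and [Cadd], [Cmul], [Cnorm]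
   agree with its operations; we reuse Coquelicot's algebra of the modulus. *)
Lemma CnormE (a : Cplx) : Cnorm a = Complex.Cmod a.
Proof. by rewrite /Cnorm /Complex.Cmod /= !Rmult_1_r. Qed.

Lemma Cadd_assoc : associative Cadd.
Proof. by move=> a b c; rewrite /Cadd /=; f_equal; ring. Qed.

Lemma Cadd_comm : commutative Cadd.
Proof. by move=> a b; rewrite /Cadd /=; f_equal; ring. Qed.

Lemma Cadd0 : left_id C0 Cadd.
Proof. by case=> a b; rewrite /Cadd /= !Rplus_0_l. Qed.

HB.instance Definition _ := Monoid.isComLaw.Build Cplx C0 Cadd Cadd_assoc Cadd_comm Cadd0.

Lemma C1_neq0 : Defs.C1 <> C0.
Proof. by case; apply: R1_neq_R0. Qed.

Lemma Cnorm_ge0 (a : Cplx) : 0 <= Cnorm a.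
Proof. rewrite CnormE; exact: Complex.Cmod_ge_0. Qed.

Lemma Cnorm0 : Cnorm C0 = 0.
Proof. rewrite CnormE; exact: Complex.Cmod_0. Qed.

Lemma Cnorm_eq0 (a : Cplx) : Cnorm a = 0 -> a = C0.
Proof. by rewrite CnormE => /Complex.Cmod_eq_0 ->. Qed.

Lemma Cnorm_add (a b : Cplx) : Cnorm (Cadd a b) <= Cnorm a + Cnorm b.
Proof. rewrite !CnormE; exact: Complex.Cmod_triangle. Qed.

Lemma Cnorm_mul (a b : Cplx) : Cnorm (Cmul a b) = Cnorm a * Cnorm b.
Proof. rewrite !CnormE; exact: Complex.Cmod_mult. Qed.

Lemma Cnorm_add_ge (a b : Cplx) : Cnorm a - Cnorm b <= Cnorm (Cadd a b).
Proof.
have ha : a = Cadd (Cadd a b) (Complex.Copp b).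
  by case: a b => a1 a2 [b1 b2]; rewrite /Cadd /Complex.Copp /=; f_equal; ring.
move: (Cnorm_add (Cadd a b) (Complex.Copp b)); rewrite -ha.
by rewrite [Cnorm (Complex.Copp b)]CnormE Complex.Cmod_opp -CnormE; lra.
Qed.

Lemma Cnorm_sum_le (I : finType) (P : pred I) (F : I -> Cplx) (B : R) :
  (forall i, P i -> Cnorm (F i) <= B) ->
  Cnorm (\big[Cadd/C0]_(i | P i) F i) <= INR #|P| * B.
Proof.
move=> hF; rewrite -sum1_card.
apply: (big_ind2 (fun a n => Cnorm a <= INR n * B)) => [|a1 n1 a2 n2 h1 h2|i /hF].
- by rewrite Cnorm0 Rmult_0_l; lra.
- by rewrite plus_INR; move: (Cnorm_add a1 a2); lra.
- by rewrite Rmult_1_l.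
Qed.

Lemma Cmul_sum (I : finType) (P : pred I) (F : I -> Cplx) (a : Cplx) :
  Cmul a (\big[Cadd/C0]_(i | P i) F i) = \big[Cadd/C0]_(i | P i) Cmul a (F i).
Proof.
apply: (big_morph (Cmul a)).
- by move=> u w; case: a u w => a1 a2 [u1 u2] [w1 w2]; rewrite /Cmul /Cadd /=; f_equal; ring.
- by case: a => a1 a2; rewrite /Cmul /C0 /=; f_equal; ring.
Qed.

Lemma Cpow_double (a : Cplx) (n : nat) : Cpow a (n + n) = Cpow (Cmul a a) n.
Proof.
elim: n => [|n IH] //; rewrite addSn addnS /= IH.
exact: (Complex.Cmult_assoc a a).
Qed.

Lemma disjointP (T : finType) (A B : {set T}) :
  reflect (forall u, u \in A -> u \in B -> False) [disjoint A & B].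
Proof.
apply: (iffP pred0P) => [h u uA uB | h u]; first by move: (h u); rewrite /= uA uB.
by apply/negP => /andP [uA uB]; exact: h u uA uB.
Qed.

Lemma coverP (T : finType) (P : {set {set T}}) (u : T) :
  reflect (exists2 f, f \in P & u \in f) (u \in cover P).
Proof. exact: bigcupP. Qed.

Lemma sub_cover (T : finType) (P : {set {set T}}) (f : {set T}) :
  f \in P -> f \subset cover P.
Proof. by move=> fP; apply/subsetP => u uf; apply/coverP; exists f. Qed.

Lemma cover_setU1 (T : finType) (f : {set T}) (P : {set {set T}}) :
  cover (f |: P) = f :|: cover P.
Proof. by rewrite /cover bigcup_setU big_set1. Qed.

Lemma trivIset_uniq (T : finType) (P : {set {set T}}) (f1 f2 : {set T}) (u : T) :
  trivIset P -> f1 \in P -> f2 \in P -> u \in f1 -> u \in f2 -> f1 = f2.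
Proof.
move=> /trivIsetP tP f1P f2P uf1 uf2; apply/eqP; apply: contraT => ne.
by move/disjointP: (tP _ _ f1P f2P ne) => /(_ u uf1 uf2).
Qed.

Lemma card_cover_uniform (T : finType) (k : nat) (P : {set {set T}}) :
  trivIset P -> (forall f, f \in P -> #|f| = k) -> #|cover P| = (k * #|P|)%N.
Proof.
move/eqP => <- hk; rewrite (eq_bigr (fun _ => k)) //.
by rewrite sum_nat_const mulnC.
Qed.

Lemma pairwise_disjointP (T : finType) (P : {set {set T}}) :
  reflect (trivIset P) [forall e1 in P, forall e2 in P, (e1 != e2) ==> [disjoint e1 & e2]].
Proof.
apply: (iffP forall_inP) => [h | /trivIsetP h e1 e1P].
  by apply/trivIsetP => e1 e2 e1P e2P; apply/implyP; exact: (forall_inP (h e1 e1P)).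
by apply/forall_inP => e2 e2P; apply/implyP; exact: h.
Qed.

Lemma perfect_matchingP (T : finType) (E M : {set {set T}}) : reflect
  [/\ M \subset E, trivIset M & forall v, exists2 e, e \in M & v \in e]
  (perfect_matching E M).
Proof.
apply: (iffP and3P) => [[ME /pairwise_disjointP Mtriv /forallP Mcov] | [ME Mtriv Mcov]].
  by split=> // v; have /exists_inP [e eM ve] := Mcov v; exists e.
split=> //; first exact/pairwise_disjointP.
by apply/forallP => v; have [e eM ve] := Mcov v; apply/exists_inP; exists e.
Qed.

Lemma half_pow (q : nat) : (/2) ^ q * 2 ^ q = 1.
Proof. by rewrite -Rpow_mult_distr Rinv_l ?pow1 //; lra. Qed.

Lemma pow_half_shift (q j : nat) : (/2) ^ (q + j).-1 * 2 ^ j <= 2 * (/2) ^ q.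
Proof.
have [qj0 | qj_gt0] := posnP (q + j).
  by move: qj0 => /eqP; rewrite addn_eq0 => /andP [/eqP -> /eqP ->] /=; lra.
have : (/2) ^ (q + j) * 2 ^ j = (/2) ^ q by rewrite pow_add Rmult_assoc half_pow Rmult_1_r.
rewrite -(prednK qj_gt0) /=; have := pow_le (/2) (q + j).-1 ltac:(lra).
have := pow_le 2 j ltac:(lra); nra.
Qed.

Lemma predD_subnK (q j c : nat) : (0 < q + j)%N -> (j <= c)%N ->
  ((q + j).-1 + (c - j) = q + c - 1)%N.
Proof. lia. Qed.

Section Admissible.
Variables (V : finType) (k : nat) (E M : {set {set V}}).
Hypothesis k_gt0 : (0 < k)%N.
Hypothesis edge_card : forall e, e \in E -> #|e| = k.
Hypothesis ME : M \subset E.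
Hypothesis M_triv : trivIset M.
Hypothesis M_cover : forall v, exists2 e, e \in M & v \in e.

Lemma edge_nonempty (e : {set V}) : e \in E -> exists u, u \in e.
Proof. by move=> /edge_card he; apply/card_gt0P; rewrite he. Qed.

(* U is M-closed when it is a union of edges of M: every edge of M meeting U
   lies inside U. *)
Definition mclosed (U : {set V}) : bool :=
  [forall e in M, ~~ [disjoint e & U] ==> (e \subset U)].

Lemma mclosedP (U : {set V}) :
  reflect (forall e, e \in M -> ~~ [disjoint e & U] -> e \subset U) (mclosed U).
Proof.
apply: (iffP forall_inP) => h e eM; first exact: (implyP (h e eM)).
by apply/implyP; exact: h.
Qed.

Lemma mclosedD (U e0 : {set V}) : mclosed U -> e0 \in M -> mclosed (U :\: e0).
Proof.
move=> /mclosedP hU e0M; apply/mclosedP => e eM; case: (eqVneq e e0) => [-> | ne] meet.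
  by case/negP: meet; apply/disjointP => u ue0; rewrite inE ue0.
apply/subsetDP; split; last exact: (trivIsetP M_triv _ _ eM e0M ne).
by apply: hU eM _; apply: contra meet; apply: disjointWr; exact: subsetDl.
Qed.

Lemma mclosedU (U e0 : {set V}) : mclosed U -> e0 \in M -> mclosed (U :|: e0).
Proof.
move=> /mclosedP hU e0M; apply/mclosedP => e eM; case: (eqVneq e e0) => [-> _ | ne meet].
  exact: subsetUr.
have /disjointP dis0 := trivIsetP M_triv e e0 eM e0M ne.
apply: subset_trans (subsetUl U e0); apply: hU eM _; apply: contra meet => dis.
apply/disjointP => u ue; rewrite inE => /orP [uU | ue0]; first exact: (disjointP _ _ dis) ue uU.
exact: dis0 ue ue0.
Qed.

Definition admissible (W : {set V}) (P : {set {set V}}) : bool :=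
  [&& P \subset E :\: M, [forall f in P, f \subset W], trivIset P &
      mclosed (W :\: cover P)].

Lemma admissibleP (W : {set V}) (P : {set {set V}}) : reflect
  [/\ P \subset E :\: M, forall f, f \in P -> f \subset W, trivIset P &
      mclosed (W :\: cover P)]
  (admissible W P).
Proof.
apply: (iffP and4P) => [[a /forall_inP b c d] | [a b c d]]; split=> //.
exact/forall_inP.
Qed.

Definition through (W : {set V}) (v : V) : {set {set V}} :=
  [set f in E :\: M | (v \in f) && (f \subset W)].

Lemma admissible_uncovered (W : {set V}) (v : V) (e0 : {set V}) (P : {set {set V}}) :
  v \in W -> e0 \in M -> v \in e0 ->
  (admissible W P && (v \notin cover P)) = (e0 \subset W) && admissible (W :\: e0) P.
Proof.
move=> vW e0M ve0; apply/idP/idP.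
- case/andP => /admissibleP [PE PW Ptriv Pcl] vP.
  have /subsetDP [e0W e0P] : e0 \subset W :\: cover P.
    move/mclosedP: (Pcl) => /(_ e0 e0M); apply; apply/negP => /disjointP /(_ v ve0); apply.
    by rewrite inE vP vW.
  rewrite e0W; apply/admissibleP; split=> // [f fP|].
    apply/subsetDP; split; first exact: PW.
    by rewrite disjoint_sym; apply: disjointWr e0P; exact: sub_cover.
  by rewrite setDDl setUC -setDDl; exact: mclosedD.
- case/andP => e0W /admissibleP [PE PW Ptriv Pcl].
  have e0P : [disjoint e0 & cover P].
    apply/disjointP => u ue0 /coverP [f fP uf].
    by move: (subsetP (PW f fP) u uf); rewrite inE ue0.
  rewrite (disjointFr e0P ve0) andbT; apply/admissibleP; split=> // [f fP|].
    exact: subset_trans (PW f fP) (subsetDl _ _).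
  have -> : W :\: cover P = (W :\: e0 :\: cover P) :|: e0.
    apply/setP => u; rewrite !inE; case: (boolP (u \in e0)) => ue0 /=.
      by rewrite (disjointFr e0P ue0) (subsetP e0W _ ue0) orbT.
    by rewrite orbF.
  exact: mclosedU.
Qed.

Lemma admissible_covered (W : {set V}) (v : V) (f : {set V}) (P : {set {set V}}) :
  f \in through W v ->
  (admissible W (f |: P) && (f \notin P)) = admissible (W :\: f) P.
Proof.
rewrite inE => /andP [fEM /andP [_ fW]].
have eqD : W :\: cover (f |: P) = W :\: f :\: cover P by rewrite cover_setU1 setDDl.
apply/idP/idP.
- case/andP => /admissibleP [PE PW Ptriv Pcl] fP; apply/admissibleP; split.
  + exact: subset_trans (subsetUr _ _) PE.
  + move=> g gP; have gfP : g \in f |: P by rewrite setU1r.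
    apply/subsetDP; split; first exact: PW.
    apply: (trivIsetP Ptriv) => //; first exact: setU11.
    by apply: contraNneq fP => <-.
  + exact: trivIsetS (subsetUr _ _) Ptriv.
  + by rewrite -eqD.
- case/admissibleP => PE PW Ptriv Pcl.
  have disf : {in P, forall g : {set V}, [disjoint f & g]}.
    move=> g /PW /subsetDP [_]; by rewrite disjoint_sym.
  have P0 : set0 \notin P.
    apply/negP => /(subsetP PE); rewrite inE => /andP [_ /edge_nonempty [u]].
    by rewrite inE.
  have [fPtriv fP] := trivIsetU1 disf Ptriv P0.
  rewrite fP andbT; apply/admissibleP; split=> //.
  + by apply/subsetP => g /setU1P [-> // | /(subsetP PE)].
  + by move=> g /setU1P [-> // | /PW /subset_trans]; apply; exact: subsetDl.
  + by rewrite eqD.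
Qed.

Lemma card_cover_M (A : {set {set V}}) : A \subset M -> #|cover A| = (k * #|A|)%N.
Proof.
move=> AM; apply: card_cover_uniform; first exact: trivIsetS AM M_triv.
by move=> e /(subsetP AM) /(subsetP ME) /edge_card.
Qed.

Lemma card_setD_edge (W f : {set V}) : f \in E -> f \subset W -> #|W :\: f| = (#|W| - k)%N.
Proof. by move=> fE fW; rewrite cardsDS // (edge_card fE). Qed.

Lemma card_setD_edge_lt (W f : {set V}) : f \in E -> f \subset W -> (#|W :\: f| < #|W|)%N.
Proof.
move=> fE fW; rewrite (card_setD_edge fE fW) ltn_subrL k_gt0 /=.
by apply: leq_trans (subset_leq_card fW); rewrite (edge_card fE).
Qed.

Lemma cover_delete (A : {set {set V}}) (e : {set V}) : A \subset M -> e \in A ->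
  cover (A :\ e) = cover A :\: e.
Proof. by move=> AM eA; rewrite coverD1 // (trivIsetS AM M_triv). Qed.

Lemma card_cover_delete (A : {set {set V}}) (e : {set V}) : A \subset M -> e \in A ->
  (#|cover (A :\ e)| < #|cover A|)%N.
Proof.
move=> AM eA; have eE := subsetP ME e (subsetP AM e eA).
have e0 : (0 < #|e|)%N by rewrite (edge_card eE).
by rewrite cover_delete // cardsDS ?sub_cover //; have := subset_leq_card (sub_cover eA); lia.
Qed.

Definition core (W : {set V}) : {set {set V}} := [set e in M | e \subset W].

Lemma core_subM (W : {set V}) : core W \subset M.
Proof. by apply/subsetP => e; rewrite inE => /andP []. Qed.

Lemma cover_core_sub (W : {set V}) : cover (core W) \subset W.
Proof. by apply/subsetP => u /coverP [e]; rewrite inE => /andP [_ /subsetP eW] /eW. Qed.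

Lemma core_cover (A : {set {set V}}) : A \subset M -> core (cover A) = A.
Proof.
move=> AM; apply/setP => e; rewrite inE; apply/andP/idP => [[eM eA] | eA].
  have [u ue] := edge_nonempty (subsetP ME e eM).
  case/coverP: (subsetP eA u ue) => g gA ug.
  by rewrite (trivIset_uniq M_triv eM (subsetP AM g gA) ue ug).
by split; [exact: (subsetP AM) | exact: sub_cover].
Qed.

Definition hit (W f : {set V}) : {set {set V}} := [set e in core W | ~~ [disjoint e & f]].

Lemma hit_sub (W f : {set V}) : hit W f \subset core W.
Proof. by apply/subsetP => e; rewrite inE => /andP []. Qed.

Lemma core_setD (W f : {set V}) : core (W :\: f) = core W :\: hit W f.
Proof.
apply/setP => e; rewrite !inE subsetD.
by case: (e \in M); case: (e \subset W); case: [disjoint e & f].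
Qed.

Lemma defect_delete (W f : {set V}) (q : nat) : f \in E -> f \subset W ->
  (k * (q + #|core W|) <= #|W|)%N ->
  (k * ((q + #|hit W f|).-1 + #|core W :\: hit W f|) <= #|W :\: f|)%N.
Proof.
move=> fE fW hq; set C := core W; set J := hit W f; have JC : J \subset C := hit_sub W f.
rewrite (cardsDS JC) (card_setD_edge fE fW).
have [/eqP | qj_gt0] := posnP (q + #|J|); last first.
  by rewrite predD_subnK ?subset_leq_card // mulnBr muln1 leq_sub2r.
rewrite addn_eq0 => /andP [/eqP -> /eqP J0]; rewrite J0 subn0 add0n.
have dis : [disjoint cover C & f].
  apply/disjointP => u /coverP [e eC ue] uf.
  have : e \in J by rewrite inE eC; apply/negP => /disjointP /(_ u ue uf).
  by rewrite (cards0_eq J0) inE.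
have hCf : (#|cover C| + #|f| <= #|W|)%N.
  have := cardsU (cover C) f; rewrite (disjoint_setI0 dis) cards0 subn0 => <-.
  by rewrite subset_leq_card // subUset cover_core_sub.
rewrite -(card_cover_M (core_subM W)) -(edge_card fE) leq_subRL; first by rewrite addnC.
exact: leq_trans (leq_addl _ _) hCf.
Qed.

Variable x : Cplx.

Definition Zsub (W : {set V}) : Cplx :=
  \big[Cadd/C0]_(P | admissible W P) Cpow x #|P|.

Lemma through_in_admissible (W : {set V}) (v : V) (P : {set {set V}}) :
  admissible W P -> v \in cover P ->
  exists g, forall f, (f \in through W v) && (f \in P) = (f == g).
Proof.
case/admissibleP => PE PW Ptriv _ /coverP [g gP vg]; exists g => f.
apply/andP/eqP => [[] | ->]; last by rewrite inE gP (subsetP PE g gP) vg (PW g gP).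
by rewrite inE => /andP [_ /andP [vf _]] fP; exact: trivIset_uniq Ptriv fP gP vf vg.
Qed.

Lemma Zsub_containing (W : {set V}) (v : V) (f : {set V}) : f \in through W v ->
  \big[Cadd/C0]_(P | admissible W P && (f \in P)) Cpow x #|P| = Cmul x (Zsub (W :\: f)).
Proof.
move=> fT; rewrite /Zsub Cmul_sum.
rewrite (reindex_onto (fun P' => f |: P') (fun P => P :\ f)) /=; last first.
  by move=> P /andP [_ fP]; rewrite setD1K.
apply: eq_big => P'.
  have -> : ((f |: P') :\ f == P') = (f \notin P').
    apply/eqP/idP => [<- | fP']; first by rewrite !inE eqxx.
    by rewrite setU1K.
  by rewrite setU11 andbT (admissible_covered P' fT).
case/andP => _ /eqP hP'; have fP' : f \notin P' by rewrite -hP' !inE eqxx.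
by rewrite cardsU1 fP'.
Qed.

Lemma Zsub_covered (W : {set V}) (v : V) :
  \big[Cadd/C0]_(P | admissible W P && (v \in cover P)) Cpow x #|P|
  = Cmul x (\big[Cadd/C0]_(f in through W v) Zsub (W :\: f)).
Proof.
rewrite Cmul_sum.
transitivity (\big[Cadd/C0]_(P | admissible W P)
                \big[Cadd/C0]_(f in through W v | f \in P) Cpow x #|P|).
  rewrite big_mkcondr; apply: eq_bigr => P adm; case: ifP => vP.
    by have [g hg] := through_in_admissible adm vP; rewrite (eq_bigl _ _ hg) big_pred1_eq.
  rewrite big_pred0 // => f; apply/negbTE/andP; rewrite inE => -[/andP [_ /andP [vf _]] fP].
  by move: vP; rewrite (subsetP (sub_cover fP) v vf).
under eq_bigr do rewrite big_mkcondr.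
rewrite exchange_big; apply: eq_bigr => f fT.
by rewrite -big_mkcondr -(Zsub_containing fT).
Qed.

Lemma Zsub_rec (W : {set V}) (v : V) (e0 : {set V}) :
  v \in W -> e0 \in M -> v \in e0 ->
  Zsub W = Cadd (Cmul x (\big[Cadd/C0]_(f in through W v) Zsub (W :\: f)))
                (if e0 \subset W then Zsub (W :\: e0) else C0).
Proof.
move=> vW e0M ve0; rewrite {1}/Zsub (bigID (fun P => v \in cover P)) /= Zsub_covered.
congr Cadd; rewrite (eq_bigl _ _ (fun P => admissible_uncovered P vW e0M ve0)).
by case: (e0 \subset W); rewrite ?big_pred0_eq.
Qed.

Lemma Zsub0 : Zsub set0 = Defs.C1.
Proof.
rewrite /Zsub (eq_bigl (fun P => P == set0)) ?big_pred1_eq ?cards0 // => P.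
apply/idP/eqP => [/admissibleP [PE PW _ _] | ->].
  apply/setP => f; rewrite inE; apply/negP => fP.
  have [u uf] := edge_nonempty (subsetP (subsetDl E M) f (subsetP PE f fP)).
  by move: (subsetP (PW f fP) u uf); rewrite inE.
apply/admissibleP; split; rewrite ?sub0set ?set0D //.
- by move=> f; rewrite inE.
- by apply/trivIsetP => f1 f2; rewrite inE.
- by apply/mclosedP => e _ /negP []; apply/disjointP => u _; rewrite inE.
Qed.

Lemma cover_diff_eq (M' : {set {set V}}) : perfect_matching E M' ->
  cover (M :\: M') = cover (M' :\: M).
Proof.
case/perfect_matchingP => _ M'triv M'cov; apply/setP => u.
apply/coverP/coverP => [[e] | [g]]; rewrite inE => /andP [h1 h2] uh.
- have [g gM' ug] := M'cov u; exists g => //; rewrite inE gM' andbT.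
  by apply: contra h1 => gM; rewrite (trivIset_uniq M_triv h2 gM uh ug).
- have [e eM ue] := M_cover u; exists e => //; rewrite inE eM andbT.
  by apply: contra h1 => eM'; rewrite (trivIset_uniq M'triv h2 eM' uh ue).
Qed.

Lemma card_symdiff (M' : {set {set V}}) : perfect_matching E M' ->
  #|symdiff M M'| = (#|M' :\: M| + #|M' :\: M|)%N.
Proof.
move=> pm; have /perfect_matchingP [M'E M'triv _] := pm.
rewrite /symdiff cardsU; have -> : (M :\: M') :&: (M' :\: M) = set0.
  by apply/setP => g; rewrite !inE; case: (g \in M); case: (g \in M').
rewrite cards0 subn0; congr (_ + _)%N; apply/eqP.
rewrite -(eqn_pmul2l k_gt0) -card_cover_M ?subsetDl // cover_diff_eq //.
rewrite (@card_cover_uniform _ k) ?(trivIsetS (subsetDl _ _) M'triv) // => f /setDP [fM' _].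
exact/edge_card/(subsetP M'E).
Qed.

(* The edges of M avoiding the cover of P complete P to a perfect matching. *)
Definition completion (P : {set {set V}}) : {set {set V}} :=
  [set e in M | [disjoint e & cover P]].

Lemma completion_diff (M' : {set {set V}}) : perfect_matching E M' ->
  (M' :\: M) :|: completion (M' :\: M) = M'.
Proof.
case/perfect_matchingP => _ M'triv M'cov; apply/setP => g.
rewrite in_setU in_setD inE; case gM : (g \in M) => /=; last by rewrite orbF.
apply/idP/idP => [gdis | gM'].
- have [u ug] := edge_nonempty (subsetP ME g gM).
  have [h hM' uh] := M'cov u; case hM : (h \in M).
    by rewrite (trivIset_uniq M_triv gM hM ug uh).
  by move/disjointP: gdis => /(_ u ug); case; apply/coverP; exists h; rewrite ?inE ?hM.
- apply/disjointP => u ug /coverP [h]; rewrite inE => /andP [hM hM'] uh.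
  by move: hM; rewrite (trivIset_uniq M'triv hM' gM' uh ug) gM.
Qed.

Lemma admissible_pm_diff (M' : {set {set V}}) : perfect_matching E M' ->
  admissible setT (M' :\: M).
Proof.
case/perfect_matchingP => M'E M'triv M'cov; apply/admissibleP; split.
- exact: setSD.
- by move=> f _; exact: subsetT.
- exact: trivIsetS (subsetDl _ _) M'triv.
apply/mclosedP => e eM /pred0Pn [w /andP [we]]; rewrite !inE andbT => wP.
have eM' : e \in M'.
  have [h hM' wh] := M'cov w; case hM : (h \in M).
    by rewrite (trivIset_uniq M_triv eM hM we wh).
  by case/negP: wP; apply/coverP; exists h; rewrite ?inE ?hM.
apply/subsetP => u ue; rewrite !inE andbT; apply/negP => /coverP [g].
rewrite inE => /andP [gM gM'] ug.
by move: gM; rewrite -(trivIset_uniq M'triv eM' gM' ue ug) eM.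
Qed.

Lemma pm_completion (P : {set {set V}}) : admissible setT P ->
  perfect_matching E (P :|: completion P) /\ (P :|: completion P) :\: M = P.
Proof.
case/admissibleP => PEM _ Ptriv /mclosedP Pcl.
have PnM f : f \in P -> f \notin M by move/(subsetP PEM); rewrite inE => /andP [].
split; last first.
  apply/setP => g; rewrite in_setD in_setU inE.
  by case gP : (g \in P); [rewrite (negPf (PnM g gP)) | case: (g \in M)].
apply/perfect_matchingP; split.
- apply/subsetP => g /setUP [/(subsetP PEM) /setDP [] // | ].
  by rewrite inE => /andP [/(subsetP ME)].
- apply: trivIsetU => //.
    by apply: trivIsetS M_triv; apply/subsetP => e; rewrite inE => /andP [].
  apply/disjointP => u uP /coverP [e]; rewrite inE => /andP [_ /disjointP edis] ue.
  exact: edis u ue uP.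
- move=> v; have [vP | vP] := boolP (v \in cover P).
    by case/coverP: vP => f fP vf; exists f; rewrite ?inE ?fP.
  have [e eM ve] := M_cover v; exists e => //; rewrite in_setU inE eM /=.
  have : e \subset setT :\: cover P.
    by apply: (Pcl _ eM); apply/negP => /disjointP /(_ v ve); apply; rewrite !inE vP.
  by case/subsetDP => _ ->; rewrite orbT.
Qed.

Lemma Zpm_Zsub (z : Cplx) : x = Cmul z z -> Zpm E M z = Zsub setT.
Proof.
move=> xE; rewrite /Zpm foldrE big_map big_enum /= /Zsub.
rewrite (reindex_onto (fun P => P :|: completion P) (fun M' => M' :\: M)) /=; last first.
  by move=> M'; rewrite inE => pm; exact: completion_diff.
apply: eq_big => P.
  rewrite inE; apply/andP/idP => [[pm /eqP <-] | /pm_completion [pm ->]]; last by rewrite pm eqxx.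
  exact: admissible_pm_diff.
by rewrite inE => /andP [pm /eqP hP]; rewrite card_symdiff // hP Cpow_double xE.
Qed.

Variable d : nat.
Hypothesis deg_bound : forall v, (#|[set f in E :\: M | v \in f]| <= d)%N.
Hypothesis small_x : 2 * Cnorm x * INR d <= 1.

Lemma through_part_le (W : {set V}) (v : V) (B : R) :
  (forall f, f \in through W v -> Cnorm (Zsub (W :\: f)) <= B) -> 0 <= B ->
  Cnorm (Cmul x (\big[Cadd/C0]_(f in through W v) Zsub (W :\: f))) <= B / 2.
Proof.
move=> hF B0; rewrite Cnorm_mul.
have hT : INR #|through W v| <= INR d.
  apply/le_INR/leP; apply: leq_trans (deg_bound v); apply: subset_leq_card.
  by apply/subsetP => f; rewrite !inE => /andP [-> /andP [-> _]].
have hS : Cnorm (\big[Cadd/C0]_(f in through W v) Zsub (W :\: f)) <= INR d * B.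
  by apply: Rle_trans (Cnorm_sum_le hF) _; apply: Rmult_le_compat_r.
have := Rmult_le_compat_l _ _ _ (Cnorm_ge0 x) hS; have := Cnorm_ge0 x; nra.
Qed.

Definition closed_bound (W : {set V}) : Prop :=
  forall A : {set {set V}}, A \subset M -> cover A = W ->
    Zsub W <> C0 /\ forall e, e \in A -> Cnorm (Zsub (W :\: e)) <= 2 * Cnorm (Zsub W).

Definition defect_bound (W : {set V}) : Prop :=
  forall q, (k * (q + #|core W|) <= #|W|)%N ->
    Cnorm (Zsub W) <= (/2) ^ q * Cnorm (Zsub (cover (core W))).

Definition bounds (W : {set V}) : Prop := closed_bound W /\ defect_bound W.

Section Induction.
Variable n : nat.
Hypothesis IH : forall W : {set V}, (#|W| < n)%N -> bounds W.

Lemma removal_bound (B J : {set {set V}}) : B \subset M -> J \subset B ->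
  (#|cover B| < n)%N -> Cnorm (Zsub (cover (B :\: J))) <= 2 ^ #|J| * Cnorm (Zsub (cover B)).
Proof.
move Hm : #|J| => m; elim: m B J Hm => [|m IHm] B J hJ BM JB hn.
  by rewrite (cards0_eq hJ) setD0 /=; lra.
have [e eJ] : exists e, e \in J by apply/card_gt0P; rewrite hJ.
have eB := subsetP JB e eJ.
have -> : B :\: J = (B :\ e) :\: (J :\ e).
  by apply/setP => g; rewrite !inE; case: (eqVneq g e) => [-> | _]; rewrite ?eJ.
apply: Rle_trans (IHm (B :\ e) (J :\ e) _ _ _ _) _.
- by move: hJ; rewrite (cardsD1 e) eJ add1n => -[].
- exact: subset_trans (subsetDl _ _) BM.
- exact: setSD.
- exact: ltn_trans (card_cover_delete BM eB) hn.
have := ((IH hn).1 B BM erefl).2 e eB; rewrite -cover_delete // => h.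
have hp := pow_le 2 m ltac:(lra).
by rewrite /= (Rmult_comm 2 (2 ^ m)) Rmult_assoc; exact: Rmult_le_compat_l hp h.
Qed.

Lemma defect_removal_bound (W' : {set V}) (B J : {set {set V}}) (q : nat) :
  B \subset M -> J \subset B -> (#|cover B| < n)%N -> (#|W'| < n)%N ->
  core W' = B :\: J -> (k * (q + #|B :\: J|) <= #|W'|)%N ->
  Cnorm (Zsub W') <= (/2) ^ q * 2 ^ #|J| * Cnorm (Zsub (cover B)).
Proof.
move=> BM JB hB hW' coreW' hq.
have := (IH hW').2 q; rewrite coreW' => /(_ hq) h1.
have := removal_bound BM JB hB; have := pow_le (/2) q ltac:(lra); nra.
Qed.

(* Ratio bound on closed sets: expanding Zsub W at a vertex of e, each term
   Zsub (W :\: f) is at most |Zsub (W :\: e)| by decay and edge removals. *)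
Lemma closed_ratio (W : {set V}) (A : {set {set V}}) (e : {set V}) :
  (#|W| <= n)%N -> A \subset M -> cover A = W -> e \in A ->
  Cnorm (Zsub (W :\: e)) <= 2 * Cnorm (Zsub W).
Proof.
move=> hW AM coverA eA; have eM := subsetP AM e eA.
have [v ve] := edge_nonempty (subsetP ME e eM).
have eW : e \subset W by rewrite -coverA sub_cover.
have vW : v \in W := subsetP eW v ve.
have coreW : core W = A by rewrite -coverA core_cover.
have cardW : #|W| = (k * #|A|)%N by rewrite -coverA card_cover_M.
have hAe : (#|cover (A :\ e)| < n)%N.
  by apply: leq_trans hW; rewrite -coverA card_cover_delete.
have term f : f \in through W v -> Cnorm (Zsub (W :\: f)) <= Cnorm (Zsub (W :\: e)).
  rewrite inE => /andP [/setDP [fE _] /andP [vf fW]].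
  set J := hit W f.
  have eJ : e \in J by rewrite inE coreW eA; apply/negP => /disjointP /(_ v ve vf).
  have JA : J :\ e \subset A :\ e by apply: setSD; rewrite -coreW hit_sub.
  have cardJA := subset_leq_card JA.
  have cardA : #|A| = #|A :\ e|.+1 by rewrite (cardsD1 e A) eA.
  have := defect_removal_bound (W' := W :\: f) (q := #|J :\ e|)
    (subset_trans (subsetDl _ _) AM) JA hAe _ _ _.
  rewrite cover_delete // coverA half_pow Rmult_1_l; apply.
  - exact: leq_trans (card_setD_edge_lt fE fW) hW.
  - by rewrite core_setD coreW setDDl setD1K.
  - by rewrite (cardsDS JA) (card_setD_edge fE fW) cardW cardA subnKC // mulnS addKn.
rewrite (Zsub_rec vW eM ve) eW.
have := through_part_le term (Cnorm_ge0 _).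
have := Cnorm_add_ge (Zsub (W :\: e)) (Cmul x (\big[Cadd/C0]_(f in through W v) Zsub (W :\: f))).
by rewrite Cadd_comm; lra.
Qed.

(* Decay on non-closed sets: at a vertex v of W outside the cover of its core,
   the matching edge at v sticks out of W, so Zsub W = x * sum of Zsub (W :\: f);
   each term decays by the induction hypothesis. *)
Lemma defect_step (W : {set V}) (q : nat) : (#|W| <= n)%N ->
  (k * (q + #|core W|) <= #|W|)%N ->
  Cnorm (Zsub W) <= (/2) ^ q * Cnorm (Zsub (cover (core W))).
Proof.
move=> hW hq; set C := core W; set Z := Cnorm (Zsub (cover C)).
have cardC : #|cover C| = (k * #|C|)%N := card_cover_M (core_subM W).
have [WC | /subsetPn [v vW vC]] := boolP (W \subset cover C).
  have eqW : cover C = W by apply/eqP; rewrite eqEsubset cover_core_sub WC.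
  have -> : q = 0%N.
    move: hq; rewrite -{2}eqW cardC mulnDr -{2}[(k * #|C|)%N]add0n leq_add2r leqn0 muln_eq0.
    by rewrite eqn0Ngt k_gt0 => /eqP.
  by rewrite /Z eqW /=; lra.
have [e0 e0M ve0] := M_cover v.
have e0W : ~~ (e0 \subset W).
  by apply: contra vC => e0W; apply/coverP; exists e0; rewrite ?inE ?e0M.
have hC : (#|cover C| < n)%N.
  apply: leq_trans hW; apply: proper_card; rewrite properE cover_core_sub /=.
  by apply/subsetPn; exists v.
have term f : f \in through W v -> Cnorm (Zsub (W :\: f)) <= 2 * (/2) ^ q * Z.
  rewrite inE => /andP [/setDP [fE _] /andP [_ fW]].
  set J := hit W f; have JC : J \subset C := hit_sub W f.
  have hq' := defect_delete fE fW hq.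
  have := defect_removal_bound (W' := W :\: f) (q := (q + #|J|).-1) (core_subM W) JC hC
            (leq_trans (card_setD_edge_lt fE fW) hW) (core_setD W f) hq'.
  move/Rle_trans; apply; rewrite -/Z.
  exact: Rmult_le_compat_r (Cnorm_ge0 _) (pow_half_shift q #|J|).
rewrite (Zsub_rec vW e0M ve0) (negPf e0W) Cadd_comm Cadd0.
have Z0 : 0 <= 2 * (/2) ^ q * Z.
  by apply: Rmult_le_pos; [apply: Rmult_le_pos; [lra | apply: pow_le; lra] | exact: Cnorm_ge0].
apply: Rle_trans (through_part_le term Z0) _; apply: Req_le; field.
Qed.

Lemma bounds_step (W : {set V}) : (#|W| <= n)%N -> bounds W.
Proof.
move=> hW; split; last by move=> q; exact: defect_step.
move=> A AM coverA; split; last by move=> e; exact: closed_ratio.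
have [A0 | [e eA]] := set_0Vmem A.
  by rewrite -coverA A0 /cover big_set0 Zsub0; exact: C1_neq0.
have hAe : (#|cover (A :\ e)| < n)%N.
  by apply: leq_trans hW; rewrite -coverA card_cover_delete.
have [nz _] := (IH hAe).1 (A :\ e) (subset_trans (subsetDl _ _) AM) erefl.
move=> W0; apply: nz; apply: Cnorm_eq0; apply: Rle_antisym (Cnorm_ge0 _).
by have := closed_ratio hW AM coverA eA; rewrite cover_delete // coverA W0 Cnorm0; lra.
Qed.

End Induction.

Lemma all_bounds (W : {set V}) : bounds W.
Proof.
move Hn : #|W| => n; elim/ltn_ind: n W Hn => n IHn W hW.
by apply: (bounds_step (fun W' hW' => IHn _ hW' W' erefl)); rewrite hW.
Qed.

Lemma Zsub_setT_neq0 : Zsub setT <> C0.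
Proof.
have coverM : cover M = setT.
  by apply/setP => u; rewrite inE; have [e eM ue] := M_cover u; apply/coverP; exists e.
by have [nz _] := (all_bounds setT).1 M (subxx M) coverM.
Qed.

End Admissible.

Lemma nonmatching_degree (V : finType) (E M : {set {set V}}) (v : V) :
  perfect_matching E M -> (#|[set f in E :\: M | v \in f]| <= (max_degree E).-1)%N.
Proof.
case/perfect_matchingP => ME _ Mcov; have [e0 e0M ve0] := Mcov v.
have sub : [set f in E :\: M | v \in f] \subset [set f in E | v \in f] :\ e0.
  apply/subsetP => f; rewrite !inE => /andP [/andP [fM fE] vf].
  by rewrite fE vf !andbT; apply: contraNneq fM => ->.
apply: leq_trans (subset_leq_card sub) _.
have hS : degree E v = #|[set f in E | v \in f] :\ e0|.+1.
  by rewrite /degree (cardsD1 e0) inE (subsetP ME e0 e0M) ve0.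
have : (degree E v <= max_degree E)%N := @leq_bigmax _ (fun w => degree E w) v.
by rewrite hS; case: (max_degree E).
Qed.

Lemma radius_small (D k : nat) (c : R) : (2 <= k)%N -> 0 <= c ->
  c <= / ((INR D - 1 + INR k) * exp 1) -> 2 * (c * c) * INR D.-1 <= 1.
Proof.
move=> k2 c0 hc; case: D hc => [_ | D]; first by rewrite /= Rmult_0_r; lra.
rewrite S_INR /= => hc.
have k2R : 2 <= INR k by have := le_INR 2 k (elimT leP k2); rewrite /=; lra.
have e2 : 2 <= exp 1 by have := exp_ineq1 1 ltac:(lra); lra.
have D0 := pos_INR D.
set L := (INR D + 1 - 1 + INR k) * exp 1.
have L4 : 2 * (INR D + 2) <= L by rewrite /L; nra.
have cL : c * L <= 1.
  have : c * L <= / L * L by apply: Rmult_le_compat_r => //; lra.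
  by rewrite Rinv_l //; lra.
have c4 : c * (2 * (INR D + 2)) <= 1 by nra.
nra.
Qed.

Theorem mainTheorem17 (V : finType) (k : nat) (E M : {set {set V}}) (z : Cplx) :
  (2 <= k)%N ->
  uniform k E ->
  perfect_matching E M ->
  Rle (Cnorm z) (Rinv (Rmult (Rplus (Rminus (INR (max_degree E)) R1) (INR k)) (exp R1))) ->
  Zpm E M z <> C0.
Proof.
move=> k2 unifE pmM hz.
have k_gt0 : (0 < k)%N by apply: leq_trans k2.
have edge_card e : e \in E -> #|e| = k by move=> eE; apply/eqP; exact: (forall_inP unifE).
have /perfect_matchingP [ME M_triv M_cover] := pmM.
have small : 2 * Cnorm (Cmul z z) * INR (max_degree E).-1 <= 1.
  by rewrite Cnorm_mul; apply: radius_small k2 (Cnorm_ge0 z) hz.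
rewrite (Zpm_Zsub k_gt0 edge_card ME M_triv M_cover (erefl (Cmul z z))).
have deg v := @nonmatching_degree V E M v pmM.
exact (Zsub_setT_neq0 k_gt0 edge_card ME M_triv M_cover deg small).
Qed.
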